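(* Let $A$ be an $n\times n$ nonsingular real matrix, $\hat\tau>0$, $\tau=\hat\tau\|A\|_2$, and let $\widetilde A=A+M_UM_\Sigma M_V^T$ where $M_U,M_V\in\mathbb{R}^{n\times m}$ have orthonormal columns and $M_\Sigma$ is $m\times m$ diagonal with entries in $(0,\tau]$. Let $F=M_\Sigma^{1/2}M_V^TA^{-1}M_UM_\Sigma^{1/2}$ and assume $F^HF+F+F^H$ is positive semidefinite (this holds in particular if $M_V^TA^{-1}M_U$ has positive semidefinite Hermitian part). Then $\widetilde A$ is nonsingular and $$\|\widetilde A^{-1}\|_2\le(1+\hat\tau\kappa_2(A))\|A^{-1}\|_2.$$
   Context: $\|\cdot\|_2$ is the spectral norm, $\kappa_2(A)=\|A\|_2\|A^{-1}\|_2$, $F^H$ is the conjugate transpose of $F$, and the Hermitian part of a matrix $X$ is $(X+X^H)/2$. *)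

From HB Require Import structures.
From mathcomp Require Import all_boot all_order all_algebra.
From mathcomp Require Import all_classical all_reals.
Set Implicit Arguments. Unset Strict Implicit. Unset Printing Implicit Defensive.
Import Order.TTheory GRing.Theory Num.Theory.
Local Open Scope ring_scope.
Local Open Scope classical_set_scope.

Section Defs.
Variable R : realType.

Definition vnorm2 (n : nat) (x : 'cV[R]_n) : R :=
  Num.sqrt (\sum_(i < n) x i 0 ^+ 2).

Definition spec_norm (m n : nat) (A : 'M[R]_(m, n)) : R :=
  sup [set vnorm2 (A *m x) | x in [set x : 'cV[R]_n | vnorm2 x <= 1]].

Definition kappa2 (n : nat) (A : 'M[R]_n) : R :=
  spec_norm A * spec_norm (invmx A).

Definition orthonormal_cols (n m : nat) (M : 'M[R]_(n, m)) : Prop :=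
  M^T *m M = 1%:M.

(* positive semidefinite (real symmetric) matrix; for real F, F^H = F^T *)
Definition psd (n : nat) (S : 'M[R]_n) : Prop :=
  S^T = S /\ forall x : 'cV[R]_n, 0 <= (x^T *m S *m x) 0 0.

End Defs.

(** By the (symmetric) Woodbury identity,
    [Ã^-1 = A^-1 - A^-1 M_U Σ^(1/2) (I + F)^-1 Σ^(1/2) M_V^T A^-1].
    The hypothesis on [F] says [|(I + F) x|^2 = |x|^2 + x^T (F^T F + F + F^T) x >= |x|^2],
    so [I + F] is invertible and its inverse has spectral norm at most 1.
    Submultiplicativity of the spectral norm then gives
    [|Ã^-1| <= |A^-1| + |A^-1| τ |A^-1| = (1 + τ̂ κ(A)) |A^-1|]. *)
From HB Require Import structures.
From mathcomp Require Import all_boot all_order all_algebra.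
From mathcomp Require Import all_classical all_reals.
From mathcomp Require Import ring lra.
Import Order.TTheory GRing.Theory Num.Theory.
Set Implicit Arguments. Unset Strict Implicit. Unset Printing Implicit Defensive.
Local Open Scope ring_scope.
Local Open Scope classical_set_scope.

Section EuclideanNorm.
Variable R : realType.
Implicit Types (n : nat) (a b : R).

Definition dotv n (x y : 'cV[R]_n) : R := \sum_i x i 0 * y i 0.

Lemma dotvE n (x y : 'cV[R]_n) : dotv x y = (x^T *m y) 0 0.
Proof. by rewrite /dotv mxE; apply: eq_bigr => i _; rewrite mxE. Qed.

Lemma dotvv_ge0 n (x : 'cV[R]_n) : 0 <= dotv x x.
Proof. by apply: sumr_ge0 => i _; rewrite -expr2 sqr_ge0. Qed.

Lemma dotvv_eq0 n (x : 'cV[R]_n) : dotv x x = 0 -> x = 0.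
Proof.
move=> x0; apply/matrixP => i j; rewrite (ord1 j) mxE.
have sq_ge0 (k : 'I_n) : xpredT k -> 0 <= x k 0 * x k 0.
  by move=> _; rewrite -expr2 sqr_ge0.
by move: (psumr_eq0P sq_ge0 x0) => /(_ i isT) /eqP; rewrite mulf_eq0 orbb => /eqP.
Qed.

Lemma dotv_mulmxl p q (M : 'M[R]_(p, q)) x y : dotv (M *m x) y = dotv x (M^T *m y).
Proof. by rewrite !dotvE trmx_mul mulmxA. Qed.

Lemma dotvDr n (x y z : 'cV[R]_n) : dotv x (y + z) = dotv x y + dotv x z.
Proof. by rewrite /dotv -big_split; apply: eq_bigr => i _; rewrite mxE mulrDr. Qed.

Lemma dotvv_comb n a b (x y : 'cV[R]_n) :
  dotv (a *: x + b *: y) (a *: x + b *: y) =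
  a ^+ 2 * dotv x x + 2 * a * b * dotv x y + b ^+ 2 * dotv y y.
Proof.
rewrite /dotv !mulr_sumr -!big_split /=; apply: eq_bigr => i _.
by rewrite !mxE; ring.
Qed.

Lemma vnorm2E n (x : 'cV[R]_n) : vnorm2 x = Num.sqrt (dotv x x).
Proof. by rewrite /vnorm2 /dotv; congr Num.sqrt; apply: eq_bigr => i _; rewrite expr2. Qed.

Lemma vnorm2_ge0 n (x : 'cV[R]_n) : 0 <= vnorm2 x.
Proof. by rewrite vnorm2E sqrtr_ge0. Qed.

Lemma sqr_vnorm2 n (x : 'cV[R]_n) : vnorm2 x ^+ 2 = dotv x x.
Proof. by rewrite vnorm2E sqr_sqrtr // dotvv_ge0. Qed.

Lemma vnorm2_eq0 n (x : 'cV[R]_n) : vnorm2 x = 0 -> x = 0.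
Proof. by move=> x0; apply: dotvv_eq0; rewrite -sqr_vnorm2 x0 expr0n. Qed.

Lemma vnorm20 n : vnorm2 (0 : 'cV[R]_n) = 0.
Proof. by rewrite vnorm2E /dotv big1 ?sqrtr0 // => i _; rewrite mxE mul0r. Qed.

Lemma vnorm2Z n a (x : 'cV[R]_n) : vnorm2 (a *: x) = `|a| * vnorm2 x.
Proof.
rewrite !vnorm2E -sqrtr_sqr -sqrtrM ?sqr_ge0 //; congr Num.sqrt.
by rewrite /dotv mulr_sumr; apply: eq_bigr => i _; rewrite !mxE; ring.
Qed.

Lemma vnorm2N n (x : 'cV[R]_n) : vnorm2 (- x) = vnorm2 x.
Proof. by rewrite -scaleN1r vnorm2Z normrN1 mul1r. Qed.

Lemma normr_entry_le_vnorm2 n (x : 'cV[R]_n) j : `|x j 0| <= vnorm2 x.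
Proof.
rewrite vnorm2E -sqrtr_sqr ler_wsqrtr // /dotv (bigD1 j) //= expr2 lerDl.
by apply: sumr_ge0 => i _; rewrite -expr2 sqr_ge0.
Qed.

Lemma vnorm2_le_sqr p q (x : 'cV[R]_p) (y : 'cV[R]_q) c :
  0 <= c -> dotv x x <= c ^+ 2 * dotv y y -> vnorm2 x <= c * vnorm2 y.
Proof.
move=> c0 le_xy; rewrite !vnorm2E -{1}(ger0_norm c0) -sqrtr_sqr -sqrtrM ?sqr_ge0 //.
exact: ler_wsqrtr.
Qed.

Lemma dotv_le_vnorm2 n (x y : 'cV[R]_n) : dotv x y <= vnorm2 x * vnorm2 y.
Proof.
set a := vnorm2 x; set b := vnorm2 y.
have [a0 | a_neq0] := eqVneq a 0.
  by rewrite a0 mul0r (vnorm2_eq0 a0) /dotv big1 // => i _; rewrite mxE mul0r.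
have [b0 | b_neq0] := eqVneq b 0.
  by rewrite b0 mulr0 (vnorm2_eq0 b0) /dotv big1 // => i _; rewrite mxE mulr0.
have ab_gt0 : 0 < a * b by rewrite mulr_gt0 // lt0r ?a_neq0 ?b_neq0 vnorm2_ge0.
have := dotvv_ge0 (b *: x + (- a) *: y).
by rewrite dotvv_comb -!sqr_vnorm2 -/a -/b; nra.
Qed.

Lemma vnorm2D n (x y : 'cV[R]_n) : vnorm2 (x + y) <= vnorm2 x + vnorm2 y.
Proof.
have xy_ge0 := addr_ge0 (vnorm2_ge0 x) (vnorm2_ge0 y).
rewrite vnorm2E -(ger0_norm xy_ge0) -sqrtr_sqr ler_wsqrtr //.
have := dotvv_comb 1 1 x y; rewrite !scale1r => ->.
by have := dotv_le_vnorm2 x y; rewrite -!sqr_vnorm2; nra.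
Qed.

Lemma vnorm2B n (x y : 'cV[R]_n) : vnorm2 (x - y) <= vnorm2 x + vnorm2 y.
Proof. by rewrite -(vnorm2N y); apply: vnorm2D. Qed.

End EuclideanNorm.

Section SpectralNorm.
Variable R : realType.
Implicit Types (p q r : nat) (c : R).

Let unit_ball_image p q (M : 'M[R]_(p, q)) :=
  [set vnorm2 (M *m x) | x in [set x : 'cV[R]_q | vnorm2 x <= 1]].

Lemma spec_norm_has_ubound p q (M : 'M[R]_(p, q)) : has_ubound (unit_ball_image M).
Proof.
exists (Num.sqrt (\sum_i (\sum_j `|M i j|) ^+ 2)) => _ [x x_le1 <-].
rewrite vnorm2E ler_wsqrtr // /dotv; apply: ler_sum => i _.
have Mx_le : `|(M *m x) i 0| <= \sum_j `|M i j|.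
  rewrite mxE; apply: le_trans (ler_norm_sum _ _ _) _; apply: ler_sum => j _.
  rewrite normrM -[leRHS]mulr1 ler_wpM2l //.
  exact: le_trans (normr_entry_le_vnorm2 _ _) x_le1.
by rewrite -expr2 -real_normK ?num_real // !expr2 ler_pM.
Qed.

Lemma spec_norm_ge0 p q (M : 'M[R]_(p, q)) : 0 <= spec_norm M.
Proof.
have : unit_ball_image M (vnorm2 (M *m 0)) by exists 0; rewrite //= vnorm20 ler01.
by move/(ub_le_sup (spec_norm_has_ubound M)); rewrite mulmx0 vnorm20.
Qed.

Lemma vnorm2_mul_le p q (M : 'M[R]_(p, q)) x :
  vnorm2 (M *m x) <= spec_norm M * vnorm2 x.
Proof.
have [x0 | x_neq0] := eqVneq (vnorm2 x) 0.
  by rewrite (vnorm2_eq0 x0) mulmx0 !vnorm20 mulr0.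
set c := vnorm2 x.
have c_gt0 : 0 < c by rewrite lt0r x_neq0 vnorm2_ge0.
have cV_ge0 : 0 <= c^-1 by rewrite invr_ge0 ltW.
have Mx_le : vnorm2 (M *m (c^-1 *: x)) <= spec_norm M.
  apply: (ub_le_sup (spec_norm_has_ubound M)); exists (c^-1 *: x) => //=.
  by rewrite vnorm2Z (ger0_norm cV_ge0) mulVf.
rewrite -scalemxAr vnorm2Z (ger0_norm cV_ge0) in Mx_le.
by rewrite -ler_pdivrMr // mulrC.
Qed.

Lemma spec_norm_le p q (M : 'M[R]_(p, q)) c :
  0 <= c -> (forall x, vnorm2 (M *m x) <= c * vnorm2 x) -> spec_norm M <= c.
Proof.
move=> c_ge0 M_le; apply: ge_sup; first by exists (vnorm2 (M *m 0)), 0; rewrite //= vnorm20.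
move=> _ [x x_le1 <-]; apply: le_trans (M_le x) _.
by rewrite -[leRHS]mulr1 ler_wpM2l.
Qed.

Lemma spec_norm_mulmx_le p q r (M : 'M[R]_(p, q)) (N : 'M[R]_(q, r)) a b :
  spec_norm M <= a -> spec_norm N <= b -> spec_norm (M *m N) <= a * b.
Proof.
move=> M_le N_le; have a_ge0 := le_trans (spec_norm_ge0 M) M_le.
have b_ge0 := le_trans (spec_norm_ge0 N) N_le.
apply: spec_norm_le => [|x]; first exact: mulr_ge0.
rewrite -mulmxA -mulrA; apply: le_trans (vnorm2_mul_le _ _) _.
apply: ler_pM; rewrite ?spec_norm_ge0 ?vnorm2_ge0 //.
by apply: le_trans (vnorm2_mul_le _ _) _; rewrite ler_wpM2r ?vnorm2_ge0.
Qed.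

Lemma spec_normB_le p q (M N : 'M[R]_(p, q)) :
  spec_norm (M - N) <= spec_norm M + spec_norm N.
Proof.
apply: spec_norm_le => [|x]; first by rewrite addr_ge0 ?spec_norm_ge0.
rewrite mulmxBl mulrDl; apply: le_trans (vnorm2B _ _) _.
by rewrite lerD ?vnorm2_mul_le.
Qed.

Lemma vnorm2_orthonormal_mul p q (U : 'M[R]_(p, q)) x :
  orthonormal_cols U -> vnorm2 (U *m x) = vnorm2 x.
Proof. by move=> U_orth; rewrite !vnorm2E dotv_mulmxl mulmxA U_orth mul1mx. Qed.

Lemma spec_norm_orthonormal_le1 p q (U : 'M[R]_(p, q)) :
  orthonormal_cols U -> spec_norm U <= 1.
Proof.
by move=> U_orth; apply: spec_norm_le => // x; rewrite mul1r vnorm2_orthonormal_mul.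
Qed.

Lemma spec_norm_tr_orthonormal_le1 p q (U : 'M[R]_(p, q)) :
  orthonormal_cols U -> spec_norm U^T <= 1.
Proof.
move=> U_orth; apply: spec_norm_le => // x; rewrite mul1r.
set z := U^T *m x.
have z_le : vnorm2 z ^+ 2 <= vnorm2 x * vnorm2 z.
  rewrite sqr_vnorm2 {1}/z dotv_mulmxl trmxK.
  by rewrite -(vnorm2_orthonormal_mul z U_orth) dotv_le_vnorm2.
have [z0 | z_neq0] := eqVneq (vnorm2 z) 0; first by rewrite z0 vnorm2_ge0.
have : 0 < vnorm2 z by rewrite lt0r z_neq0 vnorm2_ge0.
by have := vnorm2_ge0 x; nra.
Qed.

Lemma spec_norm_diag_sqrt_le q (d : 'rV[R]_q) c :
  0 <= c -> (forall i, 0 <= d 0 i <= c) ->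
  spec_norm (diag_mx (map_mx Num.sqrt d)) <= Num.sqrt c.
Proof.
move=> c_ge0 d_bnd; apply: spec_norm_le => [|x]; first exact: sqrtr_ge0.
apply: vnorm2_le_sqr; first exact: sqrtr_ge0.
rewrite sqr_sqrtr // /dotv mulr_sumr; apply: ler_sum => i _.
have /andP[di_ge0 di_le] := d_bnd i.
rewrite mul_diag_mx !mxE mulrACA -expr2 sqr_sqrtr //.
by rewrite ler_wpM2r // -expr2 sqr_ge0.
Qed.

Section NormExpanding.
Variables (q : nat) (G : 'M[R]_q).
Hypothesis G_expanding : forall x, vnorm2 x <= vnorm2 (G *m x).

Lemma expanding_unitmx : G \in unitmx.
Proof.
rewrite -unitmx_tr -row_free_unit; apply: inj_row_free => v vG0.
have Gv0 : G *m v^T = 0 by rewrite -[G]trmxK -trmx_mul vG0 trmx0.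
have := G_expanding v^T; rewrite Gv0 vnorm20 => v_le0.
have /vnorm2_eq0/(congr1 trmx) : vnorm2 v^T = 0.
  by apply/eqP; rewrite eq_le v_le0 vnorm2_ge0.
by rewrite trmxK trmx0.
Qed.

Lemma spec_norm_invmx_le1 : spec_norm (invmx G) <= 1.
Proof.
apply: spec_norm_le => // y; rewrite mul1r.
by have := G_expanding (invmx G *m y); rewrite mulmxA mulmxV ?expanding_unitmx ?mul1mx.
Qed.

End NormExpanding.

End SpectralNorm.

Lemma mulmx_sym_woodbury (R : pzRingType) n m (A Ai : 'M[R]_n) (U V : 'M[R]_(n, m))
    (H Gi : 'M[R]_m) :
  A *m Ai = 1%:M -> (1%:M + H *m V^T *m Ai *m U *m H) *m Gi = 1%:M ->
  (A + U *m (H *m H) *m V^T) *m (Ai - Ai *m U *m H *m Gi *m (H *m V^T *m Ai))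
  = 1%:M.
Proof.
move=> AAi GGi.
have UHGi : U *m H *m Gi *m H *m V^T *m Ai +
    U *m H *m H *m V^T *m Ai *m U *m H *m Gi *m H *m V^T *m Ai =
  U *m H *m H *m V^T *m Ai.
  have := congr1 (fun X => U *m H *m X *m (H *m V^T *m Ai)) GGi.
  by rewrite /= mulmxDl mul1mx mulmxDr mulmxDl !mulmxA mulmx1.
rewrite mulmxDl !mulmxBr !mulmxA AAi mul1mx -{1}UHGi.
by rewrite addrK subrK.
Qed.

Lemma vnorm2_le_addIF (R : realType) q (F : 'M[R]_q) x :
  psd (F^T *m F + F + F^T) -> vnorm2 x <= vnorm2 ((1%:M + F) *m x).
Proof.
move=> [_ F_psd]; rewrite !vnorm2E ler_wsqrtr // dotv_mulmxl mulmxA.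
have -> : (1%:M + F)^T *m (1%:M + F) = 1%:M + (F^T *m F + F + F^T).
  rewrite [_^T]linearD /= trmx1 mulmxDl !mulmxDr !mul1mx !mulmx1 -addrA.
  by congr (_ + _); rewrite [F^T + _]addrC addrA [F + _]addrC.
by rewrite mulmxDl mul1mx dotvDr lerDl dotvE mulmxA.
Qed.

Lemma invmx_sym_woodbury (R : comUnitRingType) n m (A : 'M[R]_n) (U V : 'M[R]_(n, m))
    (H : 'M[R]_m) :
  let G := 1%:M + H *m V^T *m invmx A *m U *m H in
  A \in unitmx -> G \in unitmx ->
  A + U *m (H *m H) *m V^T \in unitmx /\
  invmx (A + U *m (H *m H) *m V^T)
    = invmx A - invmx A *m U *m H *m invmx G *m (H *m V^T *m invmx A).
Proof.
move=> G A_unit G_unit.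
have AtB := mulmx_sym_woodbury (mulmxV A_unit) (mulmxV G_unit).
have [At_unit _] := mulmx1_unit AtB; split=> //.
by rewrite -[LHS]mulmx1 -{1}AtB mulKmx.
Qed.

Lemma spec_norm_sandwich_le (R : realType) n m (P Q : 'M[R]_n) (U V : 'M[R]_(n, m))
    (H Gi : 'M[R]_m) s :
  orthonormal_cols U -> orthonormal_cols V -> spec_norm H <= s -> spec_norm Gi <= 1 ->
  spec_norm (P *m U *m H *m Gi *m (H *m V^T *m Q))
    <= spec_norm P * s ^+ 2 * spec_norm Q.
Proof.
move=> U_orth V_orth H_le Gi_le.
have -> : spec_norm P * s ^+ 2 * spec_norm Q = spec_norm P * 1 * s * 1 * s * 1 * spec_norm Q.
  by rewrite !mulr1 expr2 mulrA.
rewrite !mulmxA; apply: spec_norm_mulmx_le => //.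
apply: spec_norm_mulmx_le; last exact: spec_norm_tr_orthonormal_le1.
apply: spec_norm_mulmx_le => //.
apply: spec_norm_mulmx_le => //.
apply: spec_norm_mulmx_le => //.
exact: spec_norm_mulmx_le (spec_norm_orthonormal_le1 U_orth).
Qed.

Theorem mainTheorem14 (R : realType) (n m : nat) (A : 'M[R]_n) (tauhat : R)
  (MU MV : 'M[R]_(n, m)) (d : 'rV[R]_m) :
  A \in unitmx ->
  0 < tauhat ->
  orthonormal_cols MU -> orthonormal_cols MV ->
  (forall i, 0 < d 0 i /\ d 0 i <= tauhat * spec_norm A) ->
  let MSigma := diag_mx d in
  let MSigma_half := diag_mx (map_mx Num.sqrt d) in
  let F := MSigma_half *m MV^T *m invmx A *m MU *m MSigma_half in
  psd (F^T *m F + F + F^T) ->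
  let At := A + MU *m MSigma *m MV^T in
  At \in unitmx /\
  spec_norm (invmx At) <= (1 + tauhat * kappa2 A) * spec_norm (invmx A).
Proof.
move=> A_unit tauhat_gt0 U_orth V_orth d_bnd MSigma H F F_psd At.
set tau := tauhat * spec_norm A.
have tau_ge0 : 0 <= tau by rewrite mulr_ge0 ?spec_norm_ge0 ?ltW.
have d_ge0 i : 0 <= d 0 i <= tau by have [/ltW -> ->] := d_bnd i.
have MSigmaE : MSigma = H *m H.
  rewrite mulmx_diag; congr diag_mx; apply/rowP => j.
  by have /andP[dj_ge0 _] := d_ge0 j; rewrite !mxE -expr2 sqr_sqrtr.
have G_expanding x : vnorm2 x <= vnorm2 ((1%:M + F) *m x) by apply: vnorm2_le_addIF.
rewrite /At MSigmaE.
have [At_unit ->] := invmx_sym_woodbury A_unit (expanding_unitmx G_expanding).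
split=> //; apply: le_trans (spec_normB_le _ _) _.
have H_le : spec_norm H <= Num.sqrt tau by apply: spec_norm_diag_sqrt_le.
apply: le_trans (lerD (lexx _) (spec_norm_sandwich_le _ _ U_orth V_orth H_le
  (spec_norm_invmx_le1 G_expanding))) _.
rewrite sqr_sqrtr // /tau /kappa2 le_eqVlt; apply/orP; left; apply/eqP; ring.
Qed.
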